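(* Let $\mathcal{P}$ be a topological property that is clopen hereditary (i.e., every subspace that is both open and closed in a space with $\mathcal{P}$ has $\mathcal{P}$). If a topological space $X$ is dense-$\mathcal{P}$, then every open subspace of $X$ is dense-$\mathcal{P}$.
   Context: For a topological property $\mathcal{P}$, a space $X$ is called dense-$\mathcal{P}$ if every dense subset of $X$ (with the subspace topology) has $\mathcal{P}$. No separation axioms are assumed. *)

(* general topological spaces (no separation axioms), given by
   their family of open sets, with the subspace topology on sigma types. *)
From Stdlib Require Import Classical.

Record space := Space {
  pt : Type;
  op : (pt -> Prop) -> Prop;
  op_full : op (fun _ => True);
  op_inter : forall U V, op U -> op V -> op (fun x => U x /\ V x);
  op_union : forall F : (pt -> Prop) -> Prop,
      (forall U, F U -> op U) -> op (fun x => exists U, F U /\ U x)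
}.

Arguments op {s} _.

Definition sub_op (X : space) (A : pt X -> Prop) (V : {x : pt X | A x} -> Prop) : Prop :=
  exists U : pt X -> Prop, op U /\ forall x : {x : pt X | A x}, V x <-> U (proj1_sig x).

Lemma sub_op_full X A : sub_op X A (fun _ => True).
Proof. exists (fun _ => True); split; [apply op_full | tauto]. Qed.

Lemma sub_op_inter X A U V : sub_op X A U -> sub_op X A V ->
  sub_op X A (fun x => U x /\ V x).
Proof.
  intros [U' [HU EU]] [V' [HV EV]]; exists (fun x => U' x /\ V' x); split.
  - apply op_inter; assumption.
  - intros x; rewrite EU, EV; tauto.
Qed.

Lemma sub_op_union X A (F : ({x : pt X | A x} -> Prop) -> Prop) :
  (forall U, F U -> sub_op X A U) -> sub_op X A (fun x => exists U, F U /\ U x).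
Proof.
  intros HF.
  exists (fun y => exists W, (op W /\ exists V, F V /\ forall x, V x <-> W (proj1_sig x)) /\ W y).
  split.
  - apply (op_union X (fun W => op W /\ exists V, F V /\ forall x, V x <-> W (proj1_sig x))).
    intros W [HW _]; exact HW.
  - intros x; split.
    + intros [V [FV Vx]]. destruct (HF V FV) as [W [HW EW]].
      exists W; split; [split; [exact HW | exists V; auto] | apply EW; exact Vx].
    + intros [W [[HW [V [FV EV]]] Wx]]. exists V; split; [exact FV | apply EV; exact Wx].
Qed.

Definition sub (X : space) (A : pt X -> Prop) : space :=
  Space {x : pt X | A x} (sub_op X A) (sub_op_full X A) (sub_op_inter X A)
        (sub_op_union X A).

Definition continuous (X Y : space) (f : pt X -> pt Y) : Prop :=
  forall V : pt Y -> Prop, op V -> op (fun x => V (f x)).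

Definition homeomorphic (X Y : space) : Prop :=
  exists (f : pt X -> pt Y) (g : pt Y -> pt X),
    (forall x, g (f x) = x) /\ (forall y, f (g y) = y) /\
    continuous X Y f /\ continuous Y X g.

Definition topological_property (P : space -> Prop) : Prop :=
  forall X Y : space, homeomorphic X Y -> P X -> P Y.

Definition closed (X : space) (A : pt X -> Prop) : Prop := op (fun x => ~ A x).
Definition clopen (X : space) (A : pt X -> Prop) : Prop := op A /\ closed X A.

Definition clopen_hereditary (P : space -> Prop) : Prop :=
  forall X : space, P X -> forall A : pt X -> Prop, clopen X A -> P (sub X A).

Definition dense (X : space) (D : pt X -> Prop) : Prop :=
  forall U : pt X -> Prop, op U -> (exists x, U x) -> exists x, U x /\ D x.

Definition dense_P (P : space -> Prop) (X : space) : Prop :=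
  forall D : pt X -> Prop, dense X D -> P (sub X D).

(* Let U be open in X and D dense in the subspace U.  Put
     E := D ∪ ext U,   where ext U is the exterior (interior of the complement) of U.
   Then E is dense in X: a nonempty open set either meets U, hence meets D,
   or lies inside ext U.  Since X is dense-P, the subspace E has P.  Every
   point of E lies in U or in the open set ext U, which is disjoint from U, so
   the trace of U on E is clopen in E; by clopen heredity it has P.  Finally
   this trace, a subspace of a subspace of X, has the same underlying points
   of X as D ⊆ U, and two iterated subspaces of X with the same points are
   homeomorphic; P is topological, so D has P. *)
From Stdlib Require Import Classical ProofIrrelevance.

Definition in_sub_sub (X : space) (A : pt X -> Prop) (B : pt (sub X A) -> Prop)
  (x : pt X) : Prop :=
  exists h : A x, B (exist _ x h).

Definition base (X : space) (A : pt X -> Prop) (B : pt (sub X A) -> Prop)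
  (p : pt (sub (sub X A) B)) : pt X :=
  proj1_sig (proj1_sig p).

Lemma sub_sub_op_iff (X : space) (A : pt X -> Prop) (B : pt (sub X A) -> Prop)
  (V : pt (sub (sub X A) B) -> Prop) :
  op V <-> exists O : pt X -> Prop, op O /\ forall p, V p <-> O (base X A B p).
Proof.
  split.
  - intros [W [[O [HO EO]] EW]]. exists O; split; [exact HO |].
    intros p; rewrite EW, EO; tauto.
  - intros [O [HO EO]]. exists (fun y : pt (sub X A) => O (proj1_sig y)). split.
    + exists O; split; [exact HO | tauto].
    + exact EO.
Qed.

Lemma base_inj (X : space) (A : pt X -> Prop) (B : pt (sub X A) -> Prop)
  (p q : pt (sub (sub X A) B)) :
  base X A B p = base X A B q -> p = q.
Proof.
  destruct p as [[x a] b], q as [[y a'] b']; unfold base; simpl; intros <-.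
  destruct (proof_irrelevance _ a a'). f_equal. apply proof_irrelevance.
Qed.

Lemma base_preserving_continuous (X : space)
  (A : pt X -> Prop) (B : pt (sub X A) -> Prop)
  (C : pt X -> Prop) (D : pt (sub X C) -> Prop)
  (f : pt (sub (sub X A) B) -> pt (sub (sub X C) D)) :
  (forall p, base X C D (f p) = base X A B p) ->
  continuous (sub (sub X A) B) (sub (sub X C) D) f.
Proof.
  intros Hf V HV. apply sub_sub_op_iff in HV as [O [HO EO]].
  apply sub_sub_op_iff. exists O; split; [exact HO |].
  intros p. rewrite EO, Hf. tauto.
Qed.

Definition sub_sub_point (X : space) (A : pt X -> Prop) (B : pt (sub X A) -> Prop)
  (x : pt X) (H : in_sub_sub X A B x) : pt (sub (sub X A) B).
Proof.
  refine (exist _ (exist _ x (match H with ex_intro _ h _ => h end)) _).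
  destruct H as [h Bh]. exact Bh.
Defined.

Lemma base_in_sub_sub (X : space) (A : pt X -> Prop) (B : pt (sub X A) -> Prop)
  (p : pt (sub (sub X A) B)) : in_sub_sub X A B (base X A B p).
Proof. destruct p as [[x a] b]. exists a. exact b. Qed.

Lemma sub_sub_homeomorphic (X : space)
  (A : pt X -> Prop) (B : pt (sub X A) -> Prop)
  (C : pt X -> Prop) (D : pt (sub X C) -> Prop) :
  (forall x, in_sub_sub X A B x <-> in_sub_sub X C D x) ->
  homeomorphic (sub (sub X A) B) (sub (sub X C) D).
Proof.
  intros Heq.
  set (f := fun p => sub_sub_point X C D _ (proj1 (Heq _) (base_in_sub_sub X A B p))).
  set (g := fun q => sub_sub_point X A B _ (proj2 (Heq _) (base_in_sub_sub X C D q))).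
  exists f, g.
  split; [| split; [| split]].
  - intros p. apply base_inj. reflexivity.
  - intros q. apply base_inj. reflexivity.
  - apply base_preserving_continuous. reflexivity.
  - apply base_preserving_continuous. reflexivity.
Qed.

Definition exterior (X : space) (U : pt X -> Prop) (x : pt X) : Prop :=
  exists W, (op W /\ forall y, W y -> ~ U y) /\ W x.

Lemma exterior_open (X : space) (U : pt X -> Prop) : op (exterior X U).
Proof. apply op_union. tauto. Qed.

Lemma exterior_disjoint (X : space) (U : pt X -> Prop) (x : pt X) :
  exterior X U x -> ~ U x.
Proof. intros [W [[_ HW] Wx]]. exact (HW x Wx). Qed.

Lemma dense_with_exterior (X : space) (U : pt X -> Prop)
  (D : pt (sub X U) -> Prop) :
  dense (sub X U) D ->
  dense X (fun x => in_sub_sub X U D x \/ exterior X U x).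
Proof.
  intros HD W HW [w Ww].
  destruct (classic (exists x, W x /\ U x)) as [[x [Wx Ux]] | Hmiss].
  - assert (HWU : op (s := sub X U) (fun u => W (proj1_sig u)))
      by (exists W; split; [exact HW | tauto]).
    destruct (HD _ HWU (ex_intro _ (exist _ x Ux) Wx)) as [[y hy] [Wy Dy]].
    exists y; split; [exact Wy |]. left; exists hy; exact Dy.
  - exists w; split; [exact Ww |]. right. exists W; split; [| exact Ww].
    split; [exact HW |]. intros y Wy Uy; apply Hmiss; eauto.
Qed.

Lemma trace_clopen (X : space) (U E : pt X -> Prop) :
  op U -> (forall x, E x -> U x \/ exterior X U x) ->
  clopen (sub X E) (fun e => U (proj1_sig e)).
Proof.
  intros HU Hsplit. split.
  - exists U; split; [exact HU | tauto].
  - exists (exterior X U); split; [apply exterior_open |].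
    intros [x Ex]; simpl. split.
    + intros nUx. destruct (Hsplit x Ex); [contradiction | assumption].
    + apply exterior_disjoint.
Qed.

Theorem mainTheorem2 (P : space -> Prop)
  (HP : topological_property P) (Hch : clopen_hereditary P)
  (X : space) (HX : dense_P P X)
  (U : pt X -> Prop) (HU : op U) :
  dense_P P (sub X U).
Proof.
  intros D HD.
  set (E := fun x => in_sub_sub X U D x \/ exterior X U x).
  assert (HE : P (sub X E)) by exact (HX E (dense_with_exterior X U D HD)).
  assert (Htrace : clopen (sub X E) (fun e => U (proj1_sig e))).
  { apply trace_clopen; [exact HU |].
    intros x [[h _] | Hx]; [left; exact h | right; exact Hx]. }
  assert (Hsame : forall x,
            in_sub_sub X E (fun e => U (proj1_sig e)) x <-> in_sub_sub X U D x).
  { intros x; split.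
    - intros [[[h Dh] | Hx] Ux]; [exists h; exact Dh |].
      exfalso; exact (exterior_disjoint X U x Hx Ux).
    - intros [h Dh]. exists (or_introl (ex_intro _ h Dh)). exact h. }
  exact (HP _ _ (sub_sub_homeomorphic X _ _ U D Hsame) (Hch _ HE _ Htrace)).
Qed.
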